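(* Assume (STAB). Then for any $\Omega\subseteq\Lambda$ the deformation $y\equiv0$ is a strongly stable equilibrium of $E^\Omega$. Precisely, for all $v\in\mathscr W_0(\Omega)$, $$\langle\delta^2E^\Omega(0)v,v\rangle=\psi''(0)\sum_{b\in\mathcal B^\Omega}Dv_b^2,\qquad\text{and}\qquad \psi''(0)\ge\lambda_d>0.$$
   Context: Lattice $\Lambda:=\tfrac{a_1+a_2}{3}+\{ma_1+na_2:m,n\in\mathbb Z\}$ with $a_1=(1,0)^T$, $a_2=(\tfrac12,\tfrac{\sqrt3}2)^T$; bonds $\mathcal B$ are oriented nearest-neighbour pairs; $\mathcal B^\Omega$ those with both endpoints in $\Omega$. $\mathscr W(\Omega)$: functions $\Omega\to\mathbb R$; $Dy_b:=y(\eta)-y(\xi)$ for $b=(\xi,\eta)$; $\xi_0=(0,\sqrt3/3)^T$; $\mathscr W_0(\Omega)=\{v:v(\xi_0)=0,\ \mathrm{supp}(Dv)\text{ bounded}\}$; $\dot{\mathscr W}^{1,2}(\Omega)=\{v:v(\xi_0)=0,\ Dv\in\ell^2\}$. $\psi\in C^4(\mathbb R)$, $1$-periodic and even; $E^\Omega(y;\tilde y):=\sum_{b\in\mathcal B^\Omega}[\psi(Dy_b)-\psi(D\tilde y_b)]$; $\langle\delta^2E^\Omega(y)v,w\rangle:=\sum_{b\in\mathcal B^\Omega}\psi''(Dy_b)Dv_bDw_b$; $E:=E^\Lambda$. A locally stable equilibrium is $y$ with $E^\Omega(y+u;y)\ge0$ for all $u\in\mathscr W_0(\Omega)$ with $\|Du\|_{\ell^2}\le\epsilon$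 for some $\epsilon>0$; it is strongly stable if additionally $\langle\delta^2E^\Omega(y)v,v\rangle\ge\lambda\|Dv\|_{\ell^2}^2$ for all $v\in\mathscr W_0(\Omega)$, some $\lambda>0$. $\hat y(x):=\frac1{2\pi}\arg(x)$ (branch cut on the positive $x_1$-axis) as a function on $\Lambda$. (STAB): there is $u\in\dot{\mathscr W}^{1,2}(\Lambda)$ with $\hat y+u$ a strongly stable equilibrium of $E$; $\lambda_d$ denotes its strong stability constant $\lambda$. *)

From Stdlib Require Import Reals Lra ZArith List ClassicalEpsilon.
Open Scope R_scope.

(* Lattice sites are indexed by (m,n) : Z*Z, the site being
   (a1+a2)/3 + m a1 + n a2, a1=(1,0), a2=(1/2, sqrt3/2). *)
Definition site := (Z * Z)%type.

Definition pos1 (x : site) : R := / 2 + IZR (fst x) + IZR (snd x) / 2.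
Definition pos2 (x : site) : R := sqrt 3 / 6 + IZR (snd x) * sqrt 3 / 2.

Definition dir (k : nat) : site :=
  match k with
  | 0%nat => (1, 0)%Z
  | 1%nat => (0, 1)%Z
  | 2%nat => (-1, 1)%Z
  | 3%nat => (-1, 0)%Z
  | 4%nat => (0, -1)%Z
  | _ => (1, -1)%Z
  end.

Definition addS (x d : site) : site := (fst x + fst d, snd x + snd d)%Z.

Definition is_bond (xi eta : site) : Prop := exists k, (k <= 5)%nat /\ eta = addS xi (dir k).

Definition region := site -> Prop.
Definition Lambda : region := fun _ => True.
Definition bondIn (Om : region) (xi eta : site) : Prop := is_bond xi eta /\ Om xi /\ Om eta.

Definition D (y : site -> R) (xi eta : site) : R := y eta - y xi.

Definition bterm (Om : region) (f : site -> site -> R) (xi : site) (k : nat) : R :=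
  if excluded_middle_informative (Om xi /\ Om (addS xi (dir k)))
  then f xi (addS xi (dir k)) else 0.

Definition boxpt (N i j : nat) : site := (Z.of_nat i - Z.of_nat N, Z.of_nat j - Z.of_nat N)%Z.

Definition box_sum (Om : region) (f : site -> site -> R) (N : nat) : R :=
  sum_f_R0 (fun i => sum_f_R0 (fun j => sum_f_R0 (fun k => bterm Om f (boxpt N i j) k) 5)
                      (2 * N)) (2 * N).

(* "sum_{b in B^Omega} f(b) = S" : limit of the exhausting box sums
   (for finitely supported summands the box sums are eventually constant). *)
Definition bond_sum (Om : region) (f : site -> site -> R) (S : R) : Prop :=
  Un_cv (box_sum Om f) S.

Definition xi0 : site := (0, -1)%Z.

Definition W0 (Om : region) (v : site -> R) : Prop :=
  v xi0 = 0 /\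
  exists M : Z, forall xi eta, bondIn Om xi eta -> D v xi eta <> 0 ->
    (Z.abs (fst xi) <= M /\ Z.abs (snd xi) <= M)%Z.

Definition W12 (Om : region) (v : site -> R) : Prop :=
  v xi0 = 0 /\ exists S, bond_sum Om (fun a b => (D v a b) ^ 2) S.

Definition l2norm_is (Om : region) (v : site -> R) (r : R) : Prop :=
  exists S, bond_sum Om (fun a b => (D v a b) ^ 2) S /\ r = sqrt S.

Definition energy_diff (psi : R -> R) (Om : region) (y yt : site -> R) (e : R) : Prop :=
  bond_sum Om (fun a b => psi (D y a b) - psi (D yt a b)) e.

Definition hess_is (psi2 : R -> R) (Om : region) (y v w : site -> R) (q : R) : Prop :=
  bond_sum Om (fun a b => psi2 (D y a b) * D v a b * D w a b) q.

Definition addF (y u : site -> R) : site -> R := fun x => y x + u x.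

Definition locally_stable (psi : R -> R) (Om : region) (y : site -> R) : Prop :=
  exists eps, 0 < eps /\
    forall u, W0 Om u ->
      forall r, l2norm_is Om u r -> r <= eps ->
      forall e, energy_diff psi Om (addF y u) y e -> 0 <= e.

Definition strongly_stable_with (psi psi2 : R -> R) (Om : region) (y : site -> R) (lam : R)
  : Prop :=
  locally_stable psi Om y /\ 0 < lam /\
  forall v, W0 Om v ->
    forall q S, hess_is psi2 Om y v v q ->
                bond_sum Om (fun a b => (D v a b) ^ 2) S ->
                lam * S <= q.

Definition strongly_stable (psi psi2 : R -> R) (Om : region) (y : site -> R) : Prop :=
  exists lam, strongly_stable_with psi psi2 Om y lam.

(* arg(x) in [0, 2 pi), branch cut on the positive x1-axis *)
Definition arg (x1 x2 : R) : R :=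
  let r := sqrt (x1 ^ 2 + x2 ^ 2) in
  if Rle_dec 0 x2 then acos (x1 / r) else 2 * PI - acos (x1 / r).

Definition yhat : site -> R := fun x => arg (pos1 x) (pos2 x) / (2 * PI).

Definition zeroF : site -> R := fun _ => 0.

Definition psi_hyp (psi psi1 psi2 psi3 psi4 : R -> R) : Prop :=
  (forall x, derivable_pt_lim psi x (psi1 x)) /\
  (forall x, derivable_pt_lim psi1 x (psi2 x)) /\
  (forall x, derivable_pt_lim psi2 x (psi3 x)) /\
  (forall x, derivable_pt_lim psi3 x (psi4 x)) /\
  continuity psi4 /\
  (forall x, psi (x + 1) = psi x) /\
  (forall x, psi (- x) = psi x).

From Stdlib Require Import Reals Lra Lia ZArith ClassicalEpsilon FunctionalExtensionality.
Open Scope R_scope.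

(* The stability constant of [yhat + u] is at most [psi''(0)]: test the stability against the
   indicator of a site far up the [x2]-axis. There [yhat] is nearly constant (close to [1/4],
   away from the branch cut) and [Du] is small because it is square summable, so on every
   bond touching the site [psi''(Dy)] is close to [psi''(0)]; hence [psi''(0) >= lam_d > 0].
   At [y = 0] the Hessian is exactly [psi''(0) |Dv|^2], and [0] is a local minimum of
   [psi] ([psi'(0) = 0] by evenness), which gives local stability since every bond of [Dw]
   is bounded by its l2 norm. *)

Lemma sum_f_R0_ge_term (f : nat -> R) (n k : nat) :
  (forall i, 0 <= f i) -> (k <= n)%nat -> f k <= sum_f_R0 f n.
Proof.
  intros Hf Hk. induction n as [|n IH].
  - replace k with 0%nat by lia. simpl. lra.
  - rewrite tech5. pose proof (Hf (S n)).
    destruct (Nat.eq_dec k (S n)) as [->|Hne].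
    + pose proof (cond_pos_sum f n Hf). lra.
    + assert (f k <= sum_f_R0 f n) by (apply IH; lia). lra.
Qed.

Definition line_sum (N : nat) (h : Z -> R) : R :=
  sum_f_R0 (fun i => h (Z.of_nat i - Z.of_nat N)%Z) (2 * N).

Lemma line_sum_S N h :
  line_sum (S N) h = h (- (Z.of_nat N + 1))%Z + line_sum N h + h (Z.of_nat N + 1)%Z.
Proof.
  unfold line_sum. replace (2 * S N)%nat with (S (S (2 * N))) by lia.
  rewrite tech5, decomp_sum by lia. simpl pred.
  f_equal; [f_equal|].
  - f_equal. lia.
  - apply sum_eq. intros i _. f_equal. lia.
  - f_equal. lia.
Qed.

Lemma line_sum_ext N f g : (forall z, f z = g z) -> line_sum N f = line_sum N g.
Proof. intros H. apply sum_eq. intros; auto. Qed.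

Lemma line_sum_plus N f g : line_sum N (fun z => f z + g z) = line_sum N f + line_sum N g.
Proof. apply plus_sum. Qed.

Lemma line_sum_scal N c f : line_sum N (fun z => c * f z) = c * line_sum N f.
Proof. unfold line_sum. rewrite scal_sum. apply sum_eq. intros; ring. Qed.

Lemma line_sum_le N f g : (forall z, f z <= g z) -> line_sum N f <= line_sum N g.
Proof. intros H. apply sum_growing. intros; auto. Qed.

Lemma line_sum_nonneg N h : (forall z, 0 <= h z) -> 0 <= line_sum N h.
Proof. intros. apply cond_pos_sum. intros; auto. Qed.

Lemma line_sum_eq0 N h : (forall z, h z = 0) -> line_sum N h = 0.
Proof.
  intros H. rewrite (line_sum_ext N h (fun z => 0 * h z)), line_sum_scal; [ring|].
  intros z. rewrite H. ring.
Qed.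

Lemma line_sum_ge_term N h a :
  (forall z, 0 <= h z) -> (Z.abs a <= Z.of_nat N)%Z -> h a <= line_sum N h.
Proof.
  intros Hh Ha. set (i := Z.to_nat (a + Z.of_nat N)).
  replace a with (Z.of_nat i - Z.of_nat N)%Z at 1 by (unfold i; lia).
  apply (sum_f_R0_ge_term (fun i => h (Z.of_nat i - Z.of_nat N)%Z)); [intros; apply Hh | unfold i; lia].
Qed.

Definition grid_sum (N : nat) (g : site -> R) : R :=
  line_sum N (fun a => line_sum N (fun b => g (a, b))).

Definition in_square (N : nat) (x : site) : Prop :=
  (Z.abs (fst x) <= Z.of_nat N)%Z /\ (Z.abs (snd x) <= Z.of_nat N)%Z.

Definition frame_sum (N : nat) (g : site -> R) : R :=
  line_sum (S N) (fun b => g (- (Z.of_nat N + 1), b)%Z) + line_sum (S N) (fun b => g (Z.of_nat N + 1, b)%Z)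
  + line_sum N (fun a => g (a, - (Z.of_nat N + 1))%Z) + line_sum N (fun a => g (a, Z.of_nat N + 1)%Z).

Lemma grid_sum_S N g : grid_sum (S N) g = grid_sum N g + frame_sum N g.
Proof.
  unfold grid_sum, frame_sum. rewrite line_sum_S.
  rewrite (line_sum_ext N _ (fun a => (g (a, - (Z.of_nat N + 1))%Z
                                     + line_sum N (fun b => g (a, b))) + g (a, Z.of_nat N + 1)%Z)).
  - rewrite !line_sum_plus. ring.
  - intros z. apply line_sum_S.
Qed.

Section NonnegativeGrid.

Variable g : site -> R.
Hypothesis g_nonneg : forall x, 0 <= g x.

Lemma grid_sum_nonneg N : 0 <= grid_sum N g.
Proof. apply line_sum_nonneg. intros. apply line_sum_nonneg. auto. Qed.

Lemma frame_sum_nonneg N : 0 <= frame_sum N g.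
Proof.
  unfold frame_sum.
  do 3 (apply Rplus_le_le_0_compat; [|apply line_sum_nonneg; auto]).
  apply line_sum_nonneg; auto.
Qed.

Lemma frame_sum_ge_term N x :
  in_square (S N) x -> ~ in_square N x -> g x <= frame_sum N g.
Proof.
  destruct x as [x1 x2]; unfold in_square; cbn [fst snd]; rewrite Nat2Z.inj_succ.
  intros Hin Hout. unfold frame_sum.
  set (n := (Z.of_nat N + 1)%Z).
  set (l1 := line_sum (S N) (fun b => g (- n, b)%Z)).
  set (l2 := line_sum (S N) (fun b => g (n, b))).
  set (l3 := line_sum N (fun a => g (a, - n)%Z)).
  set (l4 := line_sum N (fun a => g (a, n))).
  assert (0 <= l1 /\ 0 <= l2 /\ 0 <= l3 /\ 0 <= l4) as (H1 & H2 & H3 & H4)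
    by (repeat split; apply line_sum_nonneg; auto).
  assert (Hx2 : (Z.abs x2 <= Z.of_nat (S N))%Z) by lia.
  destruct (Z.eq_dec x1 (- n)) as [->|E1].
  { pose proof (line_sum_ge_term _ (fun b => g (- n, b)%Z) x2 (fun _ => g_nonneg _) Hx2). subst l1 l2 l3 l4; lra. }
  destruct (Z.eq_dec x1 n) as [->|E2].
  { pose proof (line_sum_ge_term _ (fun b => g (n, b)) x2 (fun _ => g_nonneg _) Hx2). subst l1 l2 l3 l4; lra. }
  assert (Hx1 : (Z.abs x1 <= Z.of_nat N)%Z) by lia.
  destruct (Z.eq_dec x2 (- n)) as [->|E3].
  { pose proof (line_sum_ge_term _ (fun a => g (a, - n)%Z) x1 (fun _ => g_nonneg _) Hx1). subst l1 l2 l3 l4; lra. }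
  replace x2 with n by lia.
  pose proof (line_sum_ge_term _ (fun a => g (a, n)) x1 (fun _ => g_nonneg _) Hx1). subst l1 l2 l3 l4; lra.
Qed.

Lemma grid_sum_le N M : (N <= M)%nat -> grid_sum N g <= grid_sum M g.
Proof.
  induction 1 as [|M _ IH]; [lra|].
  rewrite grid_sum_S. pose proof (frame_sum_nonneg M). lra.
Qed.

Lemma grid_sum_ge_term N x : in_square N x -> g x <= grid_sum N g.
Proof.
  destruct x as [a b]; intros [Ha Hb]; simpl in Ha, Hb.
  apply (Rle_trans _ (line_sum N (fun b' => g (a, b')))).
  - apply (line_sum_ge_term N (fun b' => g (a, b'))); auto.
  - apply (line_sum_ge_term N (fun a' => line_sum N (fun b' => g (a', b')))); auto.
    intros; apply line_sum_nonneg; auto.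
Qed.

Lemma grid_sum_le_lim l N : Un_cv (fun n => grid_sum n g) l -> grid_sum N g <= l.
Proof.
  intros H. apply (growing_ineq (fun n => grid_sum n g)); auto.
  intros n. apply grid_sum_le. lia.
Qed.

Lemma grid_sum_term_le_lim l x : Un_cv (fun n => grid_sum n g) l -> g x <= l.
Proof.
  intros H. set (N := Z.to_nat (Z.max (Z.abs (fst x)) (Z.abs (snd x)))).
  pose proof (grid_sum_ge_term N x ltac:(unfold in_square, N; lia)).
  pose proof (grid_sum_le_lim l N H). lra.
Qed.

(* A site at sup-distance [L+1] is counted in [frame_sum L], which is at most [l - grid_sum N0]. *)
Lemma grid_sum_tail l : Un_cv (fun n => grid_sum n g) l ->
  forall e, 0 < e -> exists N0, forall x, ~ in_square N0 x -> g x < e.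
Proof.
  intros H e He. destruct (H e He) as [N0 HN0]. exists N0.
  intros [x1 x2] Hx. unfold in_square in Hx; cbn [fst snd] in Hx.
  set (L := Z.to_nat (Z.max (Z.abs x1) (Z.abs x2) - 1)).
  assert (EL : Z.of_nat (S L) = Z.max (Z.abs x1) (Z.abs x2)) by (unfold L; lia).
  pose proof (frame_sum_ge_term L (x1, x2)
    ltac:(unfold in_square; simpl; lia) ltac:(unfold in_square; simpl; lia)).
  pose proof (grid_sum_le_lim l (S L) H).
  pose proof (grid_sum_le N0 L ltac:(lia)).
  rewrite grid_sum_S in *.
  specialize (HN0 N0 (le_n _)). unfold R_dist in HN0. apply Rabs_def2 in HN0. lra.
Qed.

End NonnegativeGrid.

Lemma grid_sum_stationary g M : (forall x, ~ in_square M x -> g x = 0) ->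
  Un_cv (fun n => grid_sum n g) (grid_sum M g).
Proof.
  intros Hg.
  assert (E : forall n, (M <= n)%nat -> grid_sum n g = grid_sum M g).
  { induction 1 as [|n HMn IH]; auto.
    rewrite grid_sum_S, IH. unfold frame_sum.
    rewrite (line_sum_eq0 (S n)), (line_sum_eq0 (S n)), (line_sum_eq0 n), (line_sum_eq0 n); [ring|..];
      intros z; apply Hg; unfold in_square; cbn [fst snd]; lia. }
  intros e He. exists M. intros n Hn. rewrite E by lia.
  unfold R_dist. rewrite Rminus_diag, Rabs_R0. lra.
Qed.

Lemma Un_cv_const c : Un_cv (fun _ => c) c.
Proof. intros e He. exists 0%nat. intros. unfold R_dist. rewrite Rminus_diag, Rabs_R0. lra. Qed.

Lemma Un_cv_scal a l c : Un_cv a l -> Un_cv (fun n => c * a n) (c * l).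
Proof. intros. apply (CV_mult (fun _ => c)); auto. apply Un_cv_const. Qed.

Definition site_bonds (Om : region) (f : site -> site -> R) (x : site) : R :=
  sum_f_R0 (fun k => bterm Om f x k) 5.

Lemma box_sum_grid Om f N : box_sum Om f N = grid_sum N (site_bonds Om f).
Proof. reflexivity. Qed.

Lemma bterm_in Om f x k : Om x -> Om (addS x (dir k)) -> bterm Om f x k = f x (addS x (dir k)).
Proof. intros. unfold bterm. destruct excluded_middle_informative; tauto. Qed.

Section NonnegativeBondSum.

Variables (Om : region) (f : site -> site -> R).
Hypothesis f_nonneg : forall a b, 0 <= f a b.

Lemma bterm_nonneg x k : 0 <= bterm Om f x k.
Proof. unfold bterm. destruct excluded_middle_informative; auto; lra. Qed.

Lemma site_bonds_nonneg x : 0 <= site_bonds Om f x.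
Proof. apply cond_pos_sum. intros. apply bterm_nonneg. Qed.

Lemma bterm_le_site_bonds x k : (k <= 5)%nat -> bterm Om f x k <= site_bonds Om f x.
Proof. apply (sum_f_R0_ge_term (bterm Om f x)). intros; apply bterm_nonneg. Qed.

Lemma bond_sum_term_le S x k : bond_sum Om f S -> (k <= 5)%nat -> bterm Om f x k <= S.
Proof.
  intros HS Hk. pose proof (bterm_le_site_bonds x k Hk).
  pose proof (grid_sum_term_le_lim _ site_bonds_nonneg S x HS). lra.
Qed.

Lemma bond_sum_tail S : bond_sum Om f S -> forall e, 0 < e ->
  exists N0, forall x k, ~ in_square N0 x -> (k <= 5)%nat -> bterm Om f x k < e.
Proof.
  intros HS e He.
  destruct (grid_sum_tail _ site_bonds_nonneg S HS e He) as [N0 HN0].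
  exists N0. intros x k Hx Hk. pose proof (bterm_le_site_bonds x k Hk). specialize (HN0 x Hx). lra.
Qed.

End NonnegativeBondSum.

Lemma W0_bond_sum_ex Om v f : W0 Om v -> (forall a b, D v a b = 0 -> f a b = 0) ->
  exists S, bond_sum Om f S.
Proof.
  intros [_ [M HM]] Hf. exists (grid_sum (Z.to_nat M) (site_bonds Om f)).
  apply (grid_sum_stationary (site_bonds Om f)). intros x Hx. unfold site_bonds.
  rewrite (sum_eq _ (fun _ => 0)); [simpl; ring|].
  intros k Hk. unfold bterm. destruct excluded_middle_informative as [[Ha Hb]|]; auto.
  apply Hf. destruct (Req_dec (D v x (addS x (dir k))) 0) as [E|E]; auto.
  exfalso. apply Hx. destruct (HM x (addS x (dir k))); [split; [exists k|]; auto | auto |].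
  unfold in_square. lia.
Qed.

Lemma bond_sum_le_scal Om f1 f2 c q S :
  (forall x k, (k <= 5)%nat -> bterm Om f1 x k <= c * bterm Om f2 x k) ->
  bond_sum Om f1 q -> bond_sum Om f2 S -> q <= c * S.
Proof.
  intros H Hq HS.
  apply (Rle_cv_lim (Un := box_sum Om f1) (Vn := fun n => c * box_sum Om f2 n)); auto using Un_cv_scal.
  intros n. rewrite !box_sum_grid; unfold grid_sum. rewrite <- line_sum_scal. apply line_sum_le. intros a.
  rewrite <- line_sum_scal. apply line_sum_le. intros b.
  unfold site_bonds. rewrite scal_sum. apply sum_Rle. intros k Hk. rewrite Rmult_comm. auto.
Qed.

Lemma bond_sum_scal Om f c S : bond_sum Om f S -> bond_sum Om (fun a b => c * f a b) (c * S).
Proof.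
  intros HS. unfold bond_sum.
  replace (box_sum Om (fun a b => c * f a b)) with (fun n => c * box_sum Om f n); auto using Un_cv_scal.
  apply functional_extensionality. intros n. rewrite !box_sum_grid; unfold grid_sum.
  rewrite <- line_sum_scal. apply line_sum_ext. intros a.
  rewrite <- line_sum_scal. apply line_sum_ext. intros b.
  unfold site_bonds. rewrite scal_sum. apply sum_eq. intros k _. unfold bterm.
  destruct excluded_middle_informative; ring.
Qed.

Lemma continuity_pt_eps f x : continuity_pt f x ->
  forall e, 0 < e -> exists d, 0 < d /\ forall y, Rabs (y - x) < d -> Rabs (f y - f x) < e.
Proof.
  intros H e He. destruct (H e He) as [d [Hd H']]. exists d. split; auto.
  intros y Hy. destruct (Req_dec y x) as [->|Hne].
  - rewrite Rminus_diag, Rabs_R0. lra.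
  - apply H'. repeat split; auto.
Qed.

Section Potential.

Variables psi psi1 psi2 psi3 psi4 : R -> R.
Hypothesis Hpsi : psi_hyp psi psi1 psi2 psi3 psi4.

Lemma psi_hyp_deriv_0 : psi1 0 = 0.
Proof.
  destruct Hpsi as (H1 & _ & _ & _ & _ & _ & Heven).
  assert (Hc : derivable_pt_lim (comp psi Ropp) 0 (psi1 (- 0) * - (1))).
  { apply derivable_pt_lim_comp; [apply derivable_pt_lim_opp, derivable_pt_lim_id | apply H1]. }
  replace (comp psi Ropp) with psi in Hc by (apply functional_extensionality; intros x; symmetry; apply Heven).
  rewrite Ropp_0 in Hc. pose proof (uniqueness_limite _ _ _ _ Hc (H1 0)). lra.
Qed.

Lemma psi_hyp_continuity_pt2 x : continuity_pt psi2 x.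
Proof.
  destruct Hpsi as (_ & _ & H3 & _). apply derivable_continuous_pt. exists (psi3 x). apply H3.
Qed.

(* Two mean value steps: psi x - psi 0 = psi1 c * x and psi1 c = psi2 e * c with e between 0 and x. *)
Lemma psi_local_min : 0 < psi2 0 ->
  exists d, 0 < d /\ forall x, Rabs x <= d -> psi 0 <= psi x.
Proof.
  intros Hpos. pose proof psi_hyp_deriv_0 as H10.
  destruct Hpsi as (H1 & H2 & _).
  destruct (continuity_pt_eps psi2 0 (psi_hyp_continuity_pt2 0) (psi2 0 / 2) ltac:(lra))
    as [d [Hd Hc]].
  assert (Hp2 : forall y, Rabs y < d -> 0 < psi2 y).
  { intros y Hy. specialize (Hc y ltac:(rewrite Rminus_0_r; auto)). apply Rabs_def2 in Hc. lra. }
  exists (d / 2). split; [lra|]. intros x Hx.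
  assert (Hxd : forall e, Rabs e <= Rabs x -> 0 < psi2 e) by (intros; apply Hp2; lra).
  destruct (Rtotal_order x 0) as [Hneg|[->|Hpos']]; [|lra|].
  - destruct (MVT_cor2 psi psi1 x 0 Hneg ltac:(intros; apply H1)) as [c [Ec Hcr]].
    destruct (MVT_cor2 psi1 psi2 c 0 ltac:(lra) ltac:(intros; apply H2)) as [e [Ee Her]].
    assert (0 < psi2 e) by (apply Hxd; rewrite !Rabs_left; lra).
    assert (psi1 c < 0) by (rewrite H10 in Ee; nra). nra.
  - destruct (MVT_cor2 psi psi1 0 x Hpos' ltac:(intros; apply H1)) as [c [Ec Hcr]].
    destruct (MVT_cor2 psi1 psi2 0 c ltac:(lra) ltac:(intros; apply H2)) as [e [Ee Her]].
    assert (0 < psi2 e) by (apply Hxd; rewrite !Rabs_right; lra).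
    assert (0 < psi1 c) by (rewrite H10 in Ee; nra). nra.
Qed.

End Potential.

Lemma bond_le_l2norm Om w r x k :
  l2norm_is Om w r -> Om x -> Om (addS x (dir k)) -> (k <= 5)%nat ->
  Rabs (D w x (addS x (dir k))) <= r.
Proof.
  intros [S [HS ->]] Hx Hy Hk.
  pose proof (bond_sum_term_le Om _ (fun a b => pow2_ge_0 (D w a b)) S x k HS Hk) as H.
  rewrite bterm_in in H by auto.
  rewrite <- (sqrt_pow2 (Rabs _)) by apply Rabs_pos. apply sqrt_le_1_alt.
  rewrite RPow_abs, Rabs_pos_eq by apply pow2_ge_0. exact H.
Qed.

Lemma zero_locally_stable psi psi1 psi2 psi3 psi4 Om :
  psi_hyp psi psi1 psi2 psi3 psi4 -> 0 < psi2 0 -> locally_stable psi Om zeroF.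
Proof.
  intros Hpsi Hpos. destruct (psi_local_min _ _ _ _ _ Hpsi Hpos) as [d [Hd Hmin]].
  exists d. split; auto. intros w _ r Hr Hrd e He.
  refine (Rle_cv_lim _ (Un_cv_const 0) He).
  intros n. rewrite box_sum_grid. apply grid_sum_nonneg. intros x.
  apply (Rle_trans _ (sum_f_R0 (fun _ => 0) 5)); [simpl; lra|].
  apply sum_Rle. intros k Hk. unfold bterm.
  destruct excluded_middle_informative as [[Hx Hy]|]; [|lra].
  pose proof (Hmin _ (Rle_trans _ _ _ (bond_le_l2norm Om w r x k Hr Hx Hy Hk) Hrd)).
  unfold D, addF, zeroF in *. rewrite !Rplus_0_l, Rminus_diag. lra.
Qed.

Lemma hess_zero psi2 Om v : W0 Om v ->
  exists S, bond_sum Om (fun a b => (D v a b) ^ 2) S /\ hess_is psi2 Om zeroF v v (psi2 0 * S).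
Proof.
  intros Hv. destruct (W0_bond_sum_ex Om v (fun a b => (D v a b) ^ 2) Hv) as [S HS].
  { intros a b ->. ring. }
  exists S. split; auto. unfold hess_is.
  replace (fun a b => psi2 (D zeroF a b) * D v a b * D v a b)
    with (fun a b => psi2 0 * (D v a b) ^ 2); [apply bond_sum_scal; auto|].
  apply functional_extensionality; intros a; apply functional_extensionality; intros b.
  replace (D zeroF a b) with 0 by (unfold D, zeroF; ring). ring.
Qed.

Definition indicator (xi : site) : site -> R :=
  fun x => if excluded_middle_informative (x = xi) then 1 else 0.

Definition near (xi x : site) : Prop :=
  (Z.abs (fst x - fst xi) <= 1)%Z /\ (Z.abs (snd x - snd xi) <= 1)%Z.

Lemma indicator_D_neq0 xi x y : D (indicator xi) x y <> 0 -> x = xi \/ y = xi.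
Proof.
  unfold D, indicator. do 2 destruct excluded_middle_informative; auto.
  intros H. exfalso. apply H. ring.
Qed.

Lemma bond_touching_near xi x j :
  x = xi \/ addS x (dir j) = xi -> near xi x /\ near xi (addS x (dir j)).
Proof.
  destruct x as [x1 x2], xi as [z1 z2]. unfold near, addS.
  intros [E|E]; injection E; intros; subst; destruct j as [|[|[|[|[|]]]]]; simpl; lia.
Qed.

Lemma indicator_W0 Om xi : xi <> xi0 -> W0 Om (indicator xi).
Proof.
  intros Hxi. split.
  - unfold indicator. destruct excluded_middle_informative; congruence.
  - exists (Z.abs (fst xi) + Z.abs (snd xi) + 1)%Z. intros x y [[j [_ ->]] _] H.
    destruct (bond_touching_near xi x j (indicator_D_neq0 _ _ _ H)) as [[N1 N2] _]. lia.
Qed.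

(* Testing the stability of [y] with the indicator of [xi]: its Hessian only sees the
   six bonds touching [xi], and [|D 1_xi|^2 >= 1]. *)
Lemma stability_const_le_local_psi2 psi psi2 y lam xi c :
  strongly_stable_with psi psi2 Lambda y lam -> xi <> xi0 ->
  (forall x j, (j <= 5)%nat -> x = xi \/ addS x (dir j) = xi ->
     psi2 (D y x (addS x (dir j))) <= c) ->
  lam <= c.
Proof.
  intros [_ [Hlam Hstab]] Hxi Hc.
  set (v := indicator xi).
  assert (Hv : W0 Lambda v) by (apply indicator_W0; auto).
  destruct (W0_bond_sum_ex Lambda v (fun a b => (D v a b) ^ 2) Hv) as [S HS].
  { intros a b ->. ring. }
  destruct (W0_bond_sum_ex Lambda v (fun a b => psi2 (D y a b) * D v a b * D v a b) Hv) as [q Hq].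
  { intros a b ->. ring. }
  pose proof (Hstab v Hv q S Hq HS) as Hlow.
  assert (Hup : q <= c * S).
  { refine (bond_sum_le_scal Lambda _ _ c q S _ Hq HS).
    intros x k Hk. rewrite !bterm_in by exact I.
    destruct (Req_dec (D v x (addS x (dir k))) 0) as [E|E]; [rewrite E; lra|].
    pose proof (Hc x k Hk (indicator_D_neq0 _ _ _ E)).
    pose proof (pow2_ge_0 (D v x (addS x (dir k)))). nra. }
  assert (HS1 : 1 <= S).
  { pose proof (bond_sum_term_le Lambda _ (fun a b => pow2_ge_0 (D v a b)) S xi 0 HS ltac:(lia)) as H.
    rewrite bterm_in in H by exact I.
    assert (addS xi (dir 0) <> xi) by (destruct xi; unfold addS; simpl; intros E; injection E; lia).
    unfold D, v, indicator in H. do 2 destruct excluded_middle_informative; try congruence. lra. }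
  nra.
Qed.

Lemma yhat_upper_half x : 0 <= pos2 x ->
  yhat x = acos (pos1 x / sqrt (pos1 x ^ 2 + pos2 x ^ 2)) / (2 * PI).
Proof. intros H. unfold yhat, arg. destruct Rle_dec; [reflexivity | contradiction]. Qed.

Lemma Rabs_div_norm_le p1 p2 : 0 < p2 -> Rabs (p1 / sqrt (p1 ^ 2 + p2 ^ 2)) <= Rabs p1 / p2.
Proof.
  intros Hp. assert (Hr : p2 <= sqrt (p1 ^ 2 + p2 ^ 2)).
  { rewrite <- (sqrt_pow2 p2) at 1 by lra. apply sqrt_le_1_alt. nra. }
  unfold Rdiv. rewrite Rabs_mult, Rabs_inv, (Rabs_pos_eq (sqrt _)) by lra.
  apply Rmult_le_compat_l; [apply Rabs_pos|]. apply Rinv_le_contravar; lra.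
Qed.

(* Far up the [x2]-axis the sites have argument close to [PI/2], away from the branch cut. *)
Lemma yhat_near_quarter e : 0 < e -> exists K : nat, forall k, (K <= k)%nat ->
  forall a, near (- Z.of_nat k, 2 * Z.of_nat k)%Z a -> Rabs (yhat a - / 4) < e.
Proof.
  intros He. pose proof PI_RGT_0.
  assert (Hacos : continuity_pt acos 0).
  { apply derivable_continuous_pt, derivable_pt_acos. lra. }
  destruct (continuity_pt_eps acos 0 Hacos (2 * PI * e) ltac:(nra)) as [d [Hd Hc]].
  destruct (INR_unbounded (2 / d + 1)) as [K HK].
  exists K. intros k Hk [a1 a2] [Ha1 Ha2]. cbn [fst snd] in Ha1, Ha2.
  assert (HkK : INR K <= INR k) by (apply le_INR; auto).
  assert (Ra1 : -1 <= IZR a1 + INR k <= 1).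
  { rewrite INR_IZR_INZ, <- plus_IZR. split; apply IZR_le; lia. }
  assert (Ra2 : -1 <= IZR a2 - 2 * INR k <= 1).
  { rewrite INR_IZR_INZ, <- mult_IZR, <- minus_IZR. split; apply IZR_le; lia. }
  assert (H3 : 1 <= sqrt 3) by (rewrite <- sqrt_1; apply sqrt_le_1_alt; lra).
  assert (Hd2 : 2 < d * (INR k - 1)).
  { assert (Hlt : 2 / d < INR k - 1) by lra. apply (Rmult_lt_compat_l d) in Hlt; auto.
    replace (d * (2 / d)) with 2 in Hlt by (field; lra). exact Hlt. }
  set (p1 := pos1 (a1, a2)). set (p2 := pos2 (a1, a2)).
  assert (Hp1 : Rabs p1 <= 2) by (unfold p1, pos1; cbn [fst snd]; apply Rabs_le; lra).
  assert (Hk1 : 1 < INR k) by nra.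
  assert (Hp2 : INR k - 1 <= p2).
  { unfold p2, pos2; cbn [fst snd].
    pose proof (Rmult_le_pos (IZR a2 - 1) (sqrt 3 - 1) ltac:(lra) ltac:(lra)). nra. }
  assert (Hz : Rabs (p1 / sqrt (p1 ^ 2 + p2 ^ 2)) < d).
  { apply (Rle_lt_trans _ _ _ (Rabs_div_norm_le p1 p2 ltac:(nra))).
    apply (Rmult_lt_reg_r p2); [nra|]. unfold Rdiv. rewrite Rmult_assoc, Rinv_l, Rmult_1_r by nra. nra. }
  rewrite yhat_upper_half by (fold p2; nra). fold p1 p2.
  specialize (Hc _ ltac:(rewrite Rminus_0_r; exact Hz)). rewrite acos_0 in Hc.
  replace (acos (p1 / sqrt (p1 ^ 2 + p2 ^ 2)) / (2 * PI) - / 4)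
    with ((acos (p1 / sqrt (p1 ^ 2 + p2 ^ 2)) - PI / 2) * / (2 * PI)) by (field; lra).
  rewrite Rabs_mult, Rabs_inv, (Rabs_pos_eq (2 * PI)) by lra.
  apply (Rmult_lt_reg_r (2 * PI)); [lra|]. rewrite Rmult_assoc, Rinv_l, Rmult_1_r by lra. lra.
Qed.

(* Near [(-k, 2k)] with [k] large, [yhat] is within [d/4] of [1/4] and, [Du] being square
   summable, [|Du| < d/2] on every bond. *)
Lemma far_site_bonds_small u d : W12 Lambda u -> 0 < d ->
  exists xi, xi <> xi0 /\ forall x j, (j <= 5)%nat -> x = xi \/ addS x (dir j) = xi ->
    Rabs (D (addF yhat u) x (addS x (dir j))) < d.
Proof.
  intros [_ [Su HSu]] Hd.
  destruct (bond_sum_tail Lambda _ (fun a b => pow2_ge_0 (D u a b)) Su HSu ((d / 2) ^ 2) ltac:(nra))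
    as [N0 HN0].
  destruct (yhat_near_quarter (d / 4) ltac:(lra)) as [K HK].
  set (k := Nat.max K (N0 + 2)).
  exists (- Z.of_nat k, 2 * Z.of_nat k)%Z. split.
  - unfold xi0. intros E. injection E. lia.
  - intros x j Hj Ht. destruct (bond_touching_near _ _ _ Ht) as [Nx Ny].
    assert (Hout : ~ in_square N0 x) by (unfold near, in_square, k in *; simpl in *; lia).
    specialize (HN0 x j Hout Hj). rewrite bterm_in in HN0 by exact I.
    assert (Hu : Rabs (D u x (addS x (dir j))) < d / 2).
    { rewrite <- (Rabs_pos_eq (d / 2)) by lra. apply Rsqr_lt_abs_0. unfold Rsqr. nra. }
    pose proof (HK k (Nat.le_max_l _ _) x Nx) as Yx.
    pose proof (HK k (Nat.le_max_l _ _) _ Ny) as Yy.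
    unfold D, addF in *. apply Rabs_def2 in Yx, Yy, Hu. apply Rabs_def1; lra.
Qed.

Lemma stability_const_le_psi2_0 psi psi1 psi2 psi3 psi4 lam u :
  psi_hyp psi psi1 psi2 psi3 psi4 -> W12 Lambda u ->
  strongly_stable_with psi psi2 Lambda (addF yhat u) lam -> lam <= psi2 0.
Proof.
  intros Hpsi Hu Hstab. apply Rle_plus_epsilon. intros e He.
  destruct (continuity_pt_eps psi2 0 (psi_hyp_continuity_pt2 _ _ _ _ _ Hpsi 0) e He) as [d [Hd Hc]].
  destruct (far_site_bonds_small u d Hu Hd) as [xi [Hxi Hsmall]].
  apply (stability_const_le_local_psi2 psi psi2 _ lam xi _ Hstab Hxi).
  intros x j Hj Ht. specialize (Hc _ ltac:(rewrite Rminus_0_r; exact (Hsmall x j Hj Ht))).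
  apply Rabs_def2 in Hc. lra.
Qed.

Theorem mainTheorem3 (psi psi1 psi2 psi3 psi4 : R -> R)
  (Hpsi : psi_hyp psi psi1 psi2 psi3 psi4)
  (lam_d : R) (u : site -> R)
  (Hu : W12 Lambda u)
  (HSTAB : strongly_stable_with psi psi2 Lambda (addF yhat u) lam_d) :
  (forall Om : region,
     strongly_stable psi psi2 Om zeroF /\
     (forall v, W0 Om v ->
        exists S, bond_sum Om (fun a b => (D v a b) ^ 2) S /\
                  hess_is psi2 Om zeroF v v (psi2 0 * S))) /\
  lam_d <= psi2 0 /\ 0 < lam_d.
Proof.
  assert (Hlam : 0 < lam_d) by apply HSTAB.
  pose proof (stability_const_le_psi2_0 _ _ _ _ _ _ _ Hpsi Hu HSTAB) as Hle.
  split; [|auto]. intros Om. split; [|apply hess_zero].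
  exists (psi2 0). split; [apply (zero_locally_stable _ _ _ _ _ Om Hpsi); lra|].
  split; [lra|]. intros v Hv q S Hq HS.
  destruct (hess_zero psi2 Om v Hv) as [S' [HS' Hq']].
  rewrite (UL_sequence _ _ _ HS HS'), (UL_sequence _ _ _ Hq Hq'). lra.
Qed.
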